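(* Let $\alpha\in(0,1)$ and $A\in\Omega^1_{\mathrm{gr}\alpha}$. Then $A$ is a continuous function on $\mathcal X$, and $$\lim_{\varepsilon\to0}\sup_{|\ell|<\varepsilon}|\ell|^{-\alpha}|A(\ell)|=0.$$
   Context: $E$ is a Banach space; $\mathbf T^2=[-\frac12,\frac12)^2$ with geodesic distance; $\mathcal X=\mathbf T^2\times\{v\in\mathbb R^2:|v|\le\frac14\}$ with $\ell=(x,v)$, $\ell_i=x$, $\ell_f=x+v$, $|\ell|=|v|$, metrised by $d(\ell,\bar\ell)=|\ell_i-\bar\ell_i|\vee|\ell_f-\bar\ell_f|$. $\Omega$ is the space of measurable $A:\mathcal X\to E$ additive under concatenation of joinable collinear segments; $|A|_{\mathrm{gr}\alpha}=\sup_{|\ell|>0}|A(\ell)|/|\ell|^\alpha$ and $\Omega_{\mathrm{gr}\alpha}=\{A:|A|_{\mathrm{gr}\alpha}<\infty\}$. For a continuous $E$-valued 1-form $A=A_1dx_1+A_2dx_2$, $\iota A(x,v)=\int_0^1\sum_iA_i(x+tv)v_i\,dt$. $\Omega^1_{\mathrm{gr}\alpha}$ is the closure of $\iota(\text{smooth }E\text{-valued 1-forms})$ in $\Omega_{\mathrm{gr}\alpha}$. *)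

From HB Require Import structures.
From mathcomp Require Import all_boot all_order all_algebra.
From mathcomp Require Import all_classical all_reals all_analysis.
Set Implicit Arguments. Unset Strict Implicit. Unset Printing Implicit Defensive.
Import Order.TTheory GRing.Theory Num.Theory.
Import numFieldNormedType.Exports.
Local Open Scope classical_set_scope.
Local Open Scope ring_scope.

Section Defs.
Variable R : realType.

(* points of R^2 represented as pairs; a segment l = (x, v) : (R*R)*(R*R) *)
Definition pt := (R * R)%type.
Definition seg := (pt * pt)%type.

Definition enorm (v : pt) : R := Num.sqrt (v.1 ^+ 2 + v.2 ^+ 2).

Definition zdist (t : R) : R :=
  let f := t - (Num.floor t)%:~R in Num.min f (1 - f).

(* geodesic distance on T^2 = R^2 / Z^2 *)
Definition tdist (x y : pt) : R :=
  Num.sqrt (zdist (x.1 - y.1) ^+ 2 + zdist (x.2 - y.2) ^+ 2).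

Definition tmod (t : R) : R := t - (Num.floor (t + 2^-1))%:~R.
Definition red (x : pt) : pt := (tmod x.1, tmod x.2).

Definition fund (x : pt) : Prop :=
  - 2^-1 <= x.1 < 2^-1 /\ - 2^-1 <= x.2 < 2^-1.

Definition Xset : set seg := [set l | fund l.1 /\ enorm l.2 <= 4^-1].

Definition seg_i (l : seg) : pt := l.1.
Definition seg_f (l : seg) : pt := (l.1.1 + l.2.1, l.1.2 + l.2.2).
Definition seglen (l : seg) : R := enorm l.2.

Definition dX (l m : seg) : R :=
  Num.max (tdist (seg_i l) (seg_i m)) (tdist (seg_f l) (seg_f m)).

Definition openX (U : set seg) : Prop :=
  U `<=` Xset /\
  forall l, U l -> exists2 e : R, 0 < e & forall m, Xset m -> dX l m < e -> U m.

Definition borelX : set (set seg) := <<s Xset, openX >>.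

Definition samedir (v w : pt) : Prop :=
  v.1 * w.2 = v.2 * w.1 /\ 0 <= v.1 * w.1 + v.2 * w.2.

Definition joinable (l m : seg) : Prop :=
  Xset l /\ Xset m /\ m.1 = red (seg_f l) /\ samedir l.2 m.2 /\
  enorm (l.2.1 + m.2.1, l.2.2 + m.2.2) <= 4^-1.

Definition concat (l m : seg) : seg := (l.1, (l.2.1 + m.2.1, l.2.2 + m.2.2)).

Variable E : completeNormedModType R.

Definition in_Omega (A : seg -> E) : Prop :=
  (forall V : set E, open V -> borelX (Xset `&` A @^-1` V)) /\
  (forall l m, joinable l m -> A (concat l m) = A l + A m).

Definition gr_le (alpha : R) (A : seg -> E) (C : R) : Prop :=
  forall l, Xset l -> 0 < seglen l -> `|A l| <= C * (seglen l) `^ alpha.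

Definition in_Omega_gr (alpha : R) (A : seg -> E) : Prop :=
  in_Omega A /\ exists C : R, gr_le alpha A C.

Fixpoint smooth_n (n : nat) (f : pt -> E) : Prop :=
  match n with
  | 0 => continuous f
  | n.+1 => continuous f /\
            forall v : pt, (forall x, derivable f x v) /\ smooth_n n ('D_v f)
  end.

Definition smooth (f : pt -> E) : Prop := forall n, smooth_n n f.

(* functions on the torus T^2: Z^2-periodic functions on R^2 *)
Definition periodic (f : pt -> E) : Prop :=
  forall x : pt, f (x.1 + 1, x.2) = f x /\ f (x.1, x.2 + 1) = f x.

(* smooth E-valued 1-form A1 dx1 + A2 dx2 on T^2 *)
Definition smooth_form (F1 F2 : pt -> E) : Prop :=
  periodic F1 /\ periodic F2 /\ smooth F1 /\ smooth F2.

(* iota A (x, v) = int_0^1 sum_i A_i (x + t v) v_i dt, the (Riemann) integral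
   of a continuous E-valued integrand, as the limit of Riemann sums *)
Definition integrand (F1 F2 : pt -> E) (l : seg) (t : R) : E :=
  let p := (l.1.1 + t * l.2.1, l.1.2 + t * l.2.2) in
  l.2.1 *: F1 p + l.2.2 *: F2 p.

Definition riemann_sum (F1 F2 : pt -> E) (l : seg) (n : nat) : E :=
  (n.+1%:R)^-1 *: \sum_(k < n.+1) integrand F1 F2 l (k%:R / n.+1%:R).

Definition iota (F1 F2 : pt -> E) (l : seg) : E :=
  lim (riemann_sum F1 F2 l @ \oo).

(* Omega^1_{gr alpha}: closure of iota(smooth 1-forms) in Omega_{gr alpha} *)
Definition in_Omega1_gr (alpha : R) (A : seg -> E) : Prop :=
  in_Omega_gr alpha A /\
  forall eps : R, 0 < eps -> exists F1 F2 : pt -> E, smooth_form F1 F2 /\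
    exists2 C : R, C < eps & gr_le alpha (fun l => A l - iota F1 F2 l) C.

Definition continuous_X (A : seg -> E) : Prop :=
  forall l, Xset l -> forall eps : R, 0 < eps ->
    exists2 delta : R, 0 < delta &
      forall m, Xset m -> dX l m < delta -> `|A l - A m| < eps.

Definition sup_small (alpha : R) (A : seg -> E) (eps : R) : R :=
  sup [set r : R | exists l, [/\ Xset l, 0 < seglen l, seglen l < eps &
                                  r = (seglen l) `^ (- alpha) * `|A l|]].

End Defs.

(* Each smooth form F is continuous and bounded on a compact square containing all segments, so
   the Riemann sums of its line integral iota F converge uniformly on X and are equicontinuous
   there (periodicity handles the identification in the metric d); hence iota F is continuous
   on X and |iota F l| <= K |l|.  Since A vanishes on degenerate segments and |l| <= 1/4, the
   bound |A - iota F|_{gr alpha} < eps makes A a uniform limit of continuous functions, and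
   yields |l|^-alpha |A l| <= eps + K |l|^(1 - alpha), which is small for small |l| as alpha < 1. *)

From Pilot Require Import Defs.
From HB Require Import structures.
From mathcomp Require Import all_boot all_order all_algebra.
From mathcomp Require Import all_classical all_reals all_analysis.
From mathcomp Require Import zify ring lra.
Import Order.TTheory GRing.Theory Num.Theory.
Import numFieldNormedType.Exports.
Local Open Scope classical_set_scope.
Local Open Scope ring_scope.
Set Implicit Arguments. Unset Strict Implicit.

Section compact_continuity.
Variable R : realType.

Lemma compact_unif_continuous (T U : pseudoMetricType R) (f : T -> U) (K : set T) :
  continuous f -> compact K -> forall e : R, 0 < e ->
  exists2 d : R, 0 < d & forall x y, K x -> ball x d y -> ball (f x) e (f y).
Proof.
move=> fc /compact_near_coveringP cK e e0.
have : \forall d \near (0 : R)^'+,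
    K `<=` [set x | forall y, ball x d y -> ball (f x) e (f y)].
  apply: cK => x Kx.
  have /nbhs_ballP [r r0 hr] : nbhs x (f @^-1` ball (f x) (e / 2)).
    by apply: fc; apply: nbhsx_ballx; rewrite divr_gt0.
  have r20 : 0 < r / 2 by rewrite divr_gt0.
  near=> x' d.
  have xx' : ball x (r / 2) x' by near: x'; exact: nbhsx_ballx.
  have dr : d <= r / 2 by apply/ltW; near: d; exact: nbhs_right_lt.
  move=> y /(le_ball dr) x'y.
  apply: ball_splitr (hr _ (ball_split xx' x'y)); apply: hr.
  by apply: le_ball xx'; rewrite ler_pdivrMr // ler_pMr // ler1n.
move=> /(filterI (nbhs_right_gt 0)) /filter_ex [d [d0 hd]].
by exists d => // x y /hd; apply.
Unshelve. all: by end_near.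
Qed.

Lemma compact_norm_bounded (T : topologicalType) (V : normedModType R) (f : T -> V) (K : set T) :
  continuous f -> compact K -> exists2 M : R, 0 <= M & forall x, K x -> `|f x| <= M.
Proof.
move=> fc cK.
have [M [_ HM]] := compact_bounded (continuous_compact (continuous_subspaceT fc) cK).
exists (`|M| + 1) => [|x Kx]; first by rewrite addr_ge0.
apply: (HM (`|M| + 1)); last by exists x.
by apply: le_lt_trans (ler_norm M) _; rewrite ltrDl.
Qed.

End compact_continuity.

Section torus.
Variable R : realType.
Implicit Types (a b d t x y : R).

Lemma zdist_lt_int t d : zdist t < d -> exists k : int, `|t - k%:~R| < d.
Proof.
have := floor_itv t; rewrite /zdist gt_min => /andP[t_ge t_lt] /orP[h|h].
- by exists (Num.floor t); rewrite ger0_norm // subr_ge0.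
- exists (Num.floor t + 1); rewrite ler0_norm ?subr_le0 ?(ltW t_lt) //.
  move: t_lt; rewrite intrD -[1%:~R]/(1 : R); lra.
Qed.

Lemma tdist_lt_zdist (p q : pt R) d : tdist p q < d ->
  zdist (p.1 - q.1) < d /\ zdist (p.2 - q.2) < d.
Proof.
by rewrite /tdist => h; split; apply: le_lt_trans h; apply: le_trans (ler_norm _) _;
  rewrite -sqrtr_sqr ler_wsqrtr // ?lerDl ?lerDr sqr_ge0.
Qed.

Lemma zdist_lt_common_int x y a b d : `|a| <= 4^-1 -> `|b| <= 4^-1 -> d <= 8^-1 ->
  zdist (x - y) < d -> zdist (x + a - (y + b)) < d ->
  exists k : int, `|x - y - k%:~R| < d /\ `|x + a - (y + b) - k%:~R| < d.
Proof.
move=> ha hb d8 /zdist_lt_int [k hk] /zdist_lt_int [j hj]; exists k; split => //.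
suff -> : k = j by [].
have : `|j - k| < 1 :> int.
  rewrite -(ltr_int R) intr_norm intrB.
  move: ha hb hk hj; rewrite !ler_norml !ltr_norml.
  move=> /andP[? ?] /andP[? ?] /andP[? ?] /andP[? ?]; apply/andP; split; lra.
lia.
Qed.

Lemma periodic1_int (T : Type) (h : R -> T) : (forall t, h (t + 1) = h t) ->
  forall (k : int) t, h (t + k%:~R) = h t.
Proof.
move=> h1; have hn (n : nat) t : h (t + n%:R) = h t.
  by elim: n t => [|n IH] t; rewrite ?addr0 // -natr1 addrA h1 IH.
case=> [n|n] t; first exact: hn.
by have := hn n.+1 (t - n.+1%:R); rewrite subrK NegzE intrN.
Qed.

Lemma tmod_id t : - 2^-1 <= t < 2^-1 -> tmod t = t.
Proof.
move=> /andP[t0 t1]; rewrite /tmod (_ : Num.floor _ = 0) ?subr0 //.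
by apply: floor_def; rewrite add0r -[0%:~R]/(0 : R) -[1%:~R]/(1 : R); apply/andP; split; lra.
Qed.

End torus.

Section segments.
Variable R : realType.
Implicit Types (l m : seg R) (a b d k t x y : R).

Lemma ball_ptE (p q : pt R) d : ball p d q = (`|p.1 - q.1| < d /\ `|p.2 - q.2| < d).
Proof. by rewrite /ball /= /prod_ball -!ball_normE. Qed.

Lemma coord_close x y a b k d : `|x - y - k| < d -> `|x + a - (y + b) - k| < d ->
  `|a - b| < 2 * d /\ forall t, 0 <= t <= 1 -> `|x + t * a - (y + t * b + k)| < d.
Proof.
set u := x - y - k; set w := x + a - (y + b) - k => hu hw; split.
  have -> : a - b = w - u by rewrite /u /w; ring.
  by apply: le_lt_trans (ler_normB w u) _; rewrite mulr2n mulrDl mul1r ltrD.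
move=> t /andP[t0 t1].
have -> : x + t * a - (y + t * b + k) = (1 - t) * u + t * w by rewrite /u /w; ring.
clearbody u w; apply: le_lt_trans (ler_normD _ _) _.
have t1' : 0 <= 1 - t by rewrite subr_ge0.
rewrite !normrM (ger0_norm t0) (ger0_norm t1').
have mu : `|u| <= Num.max `|u| `|w| by rewrite le_max lexx.
have mw : `|w| <= Num.max `|u| `|w| by rewrite le_max lexx orbT.
have : Num.max `|u| `|w| < d by rewrite gt_max hu hw.
have := ler_wpM2l t1' mu; have := ler_wpM2l t0 mw; lra.
Qed.

Definition seg_pt l t : pt R := (l.1.1 + t * l.2.1, l.1.2 + t * l.2.2).

Definition square : set (pt R) := `[-1, 1] `*` `[-1, 1].

Lemma compact_square : compact square.
Proof. by apply: compact_setX; apply: segment_compact. Qed.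

Lemma enorm_ge_norm1 (v : pt R) : `|v.1| <= enorm v.
Proof. by rewrite /enorm -sqrtr_sqr ler_wsqrtr // lerDl sqr_ge0. Qed.

Lemma enorm_ge_norm2 (v : pt R) : `|v.2| <= enorm v.
Proof. by rewrite /enorm -sqrtr_sqr ler_wsqrtr // lerDr sqr_ge0. Qed.

Lemma enorm_eq0 (v : pt R) : enorm v = 0 -> v.1 = 0 /\ v.2 = 0.
Proof.
move=> v0; have := enorm_ge_norm1 v; have := enorm_ge_norm2 v.
by rewrite v0 !normr_le0 => /eqP-> /eqP->.
Qed.

Lemma Xset_bounds l : Xset l ->
  [/\ `|l.1.1| <= 2^-1, `|l.1.2| <= 2^-1, `|l.2.1| <= 4^-1 & `|l.2.2| <= 4^-1].
Proof.
case=> -[/andP[x1 x1'] /andP[x2 x2']] v.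
split; try by rewrite ler_norml; apply/andP; split; lra.
- exact: le_trans (enorm_ge_norm1 _) v.
- exact: le_trans (enorm_ge_norm2 _) v.
Qed.

Lemma seg_pt_square l t : Xset l -> 0 <= t <= 1 -> square (seg_pt l t).
Proof.
move=> /Xset_bounds[x1 x2 v1 v2] /andP[t0 t1].
have tv (v : R) : `|t * v| <= `|v| by rewrite normrM ger0_norm // ler_piMl.
have := tv l.2.1; have := tv l.2.2 => tv2 tv1.
split; rewrite /= in_itv /= -ler_norml; apply: le_trans (ler_normD _ _) _; lra.
Qed.

(* Closeness in dX is closeness of both endpoints modulo Z^2; since segments are short, the
   same integer shift works for both endpoints, hence for every point of the segment. *)
Lemma dX_lt_seg_pt l m d : Xset l -> Xset m -> d <= 8^-1 -> dX l m < d ->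
  exists k1 k2 : int, [/\ `|l.2.1 - m.2.1| < 2 * d, `|l.2.2 - m.2.2| < 2 * d &
    forall t, 0 <= t <= 1 ->
      ball (seg_pt l t) d ((seg_pt m t).1 + k1%:~R, (seg_pt m t).2 + k2%:~R)].
Proof.
move=> Xl Xm d8; have [_ _ l1 l2] := Xset_bounds Xl; have [_ _ m1 m2] := Xset_bounds Xm.
rewrite /dX gt_max => /andP[/tdist_lt_zdist[i1 i2] /tdist_lt_zdist[f1 f2]].
have [k1 [/coord_close c1 /c1[v1 t1]]] := zdist_lt_common_int l1 m1 d8 i1 f1.
have [k2 [/coord_close c2 /c2[v2 t2]]] := zdist_lt_common_int l2 m2 d8 i2 f2.
exists k1, k2; split => // t ht; rewrite ball_ptE /=.
by split; [exact: t1|exact: t2].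
Qed.

End segments.

Section grid_average.
Variables (R : realType) (E : normedModType R).
Implicit Types (g h : R -> E) (n m N : nat) (delta eta : R).

Definition grid_avg g n : E := n.+1%:R^-1 *: \sum_(k < n.+1) g (k%:R / n.+1%:R).

Definition small_oscillation g delta eta := forall s t, 0 <= s <= 1 -> 0 <= t <= 1 ->
  `|s - t| <= delta -> `|g s - g t| <= eta.

Lemma grid_point01 k n : (k <= n.+1)%N -> 0 <= (k%:R / n.+1%:R : R) <= 1.
Proof. by move=> kn; rewrite divr_ge0 //= ler_pdivrMr ?ltr0Sn // mul1r ler_nat. Qed.

Lemma grid_avg_dist g h n eta : (forall t, 0 <= t <= 1 -> `|g t - h t| <= eta) ->
  `|grid_avg g n - grid_avg h n| <= eta.
Proof.
move=> gh; rewrite /grid_avg -scalerBr -sumrB normrZ ger0_norm ?invr_ge0 //.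
rewrite ler_pdivrMl ?ltr0Sn //.
have -> : n.+1%:R * eta = \sum_(k < n.+1) eta by rewrite sumr_const card_ord mulr_natl.
apply: le_trans (ler_norm_sum _ _ _) (ler_sum _ _) => k _.
by apply: gh; apply: grid_point01; exact: ltnW.
Qed.

Lemma grid_avg_norm_le g n eta : (forall t, 0 <= t <= 1 -> `|g t| <= eta) ->
  `|grid_avg g n| <= eta.
Proof.
have avg0 : grid_avg (fun=> 0) n = 0 by rewrite /grid_avg big1 ?scaler0.
move=> hg; rewrite -[grid_avg g n]subr0 -avg0.
by apply: grid_avg_dist => t /hg; rewrite subr0.
Qed.

Lemma sum_ord_mul (G : nat -> E) (a b : nat) :
  \sum_(i < a * b) G i = \sum_(k < a) \sum_(j < b) G (k * b + j)%N.
Proof.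
elim: a => [|a IH]; first by rewrite mul0n !big_ord0.
by rewrite big_ord_recr /= -IH mulSn addnC big_split_ord.
Qed.

(* Each cell of the coarse grid is split into m.+1 cells of the fine one. *)
Lemma grid_avg_refine g n m eta : small_oscillation g n.+1%:R^-1 eta ->
  `|grid_avg g n - grid_avg g (n.+1 * m.+1).-1| <= eta.
Proof.
move=> osc; set a := n.+1; set b := m.+1.
have ab : ((a * b).-1).+1 = (a * b)%N by rewrite prednK // muln_gt0.
have a0 : (a%:R : R) != 0 by rewrite pnatr_eq0.
have b0 : (b%:R : R) != 0 by rewrite pnatr_eq0.
have coarse : grid_avg g n =
    (a * b)%:R^-1 *: \sum_(k < a) \sum_(j < b) g (k%:R / a%:R).
  under [in RHS]eq_bigr do rewrite sumr_const card_ord.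
  rewrite sumrMnl -[_ *+ b]scaler_nat scalerA natrM invfM -mulrA mulVf ?mulr1 //.
rewrite coarse /grid_avg ab (sum_ord_mul (fun i => g (i%:R / (a * b)%:R))) -scalerBr -sumrB.
under eq_bigr do rewrite -sumrB.
rewrite normrZ ger0_norm ?invr_ge0 // ler_pdivrMl ?ltr0n ?muln_gt0 //.
have -> : (a * b)%:R * eta = \sum_(k < a) \sum_(j < b) eta.
  by rewrite (eq_bigr (fun=> eta *+ b)) => [|k _]; rewrite sumr_const card_ord // -mulrnA mulr_natl mulnC.
apply: le_trans (ler_norm_sum _ _ _) (ler_sum _ _) => k _.
apply: le_trans (ler_norm_sum _ _ _) (ler_sum _ _) => j _.
apply: osc; first by apply: grid_point01; exact: ltnW.
  rewrite divr_ge0 //= ler_pdivrMr ?ltr0n ?muln_gt0 // mul1r ler_nat.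
  by have := ltn_ord k; have := ltn_ord j; rewrite -/a -/b; nia.
have -> : (k%:R / a%:R - (k * b + j)%N%:R / (a * b)%:R : R) = - (j%:R / (a%:R * b%:R)).
  by rewrite natrD !natrM; field; apply/andP.
rewrite normrN ger0_norm ?divr_ge0 ?mulr_ge0 // ler_pdivrMr ?mulr_gt0 ?ltr0n //.
by rewrite mulrA mulVf // mul1r ler_nat ltnW.
Qed.

Lemma grid_avg_cauchy g N eta : small_oscillation g N.+1%:R^-1 eta ->
  forall n m, (N <= n)%N -> (N <= m)%N -> `|grid_avg g n - grid_avg g m| <= 2 * eta.
Proof.
move=> osc n m Nn Nm.
have osc_at k : (N <= k)%N -> small_oscillation g k.+1%:R^-1 eta.
  move=> Nk s t hs ht st; apply: osc => //; apply: le_trans st _.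
  by rewrite lef_pV2 ?posrE ?ltr0Sn // ler_nat.
have := grid_avg_refine m (osc_at n Nn); have := grid_avg_refine n (osc_at m Nm).
rewrite mulnC => hm hn; rewrite mulr2n mulrDl mul1r.
apply: le_trans (ler_distD (grid_avg g (n.+1 * m.+1).-1) _ _) _.
by rewrite lerD // distrC.
Qed.

End grid_average.

Section complete_space.
Variables (R : realType) (E : completeNormedModType R).

Lemma grid_avg_cvg (g : R -> E) :
  (forall eta, 0 < eta -> exists N, small_oscillation g N.+1%:R^-1 eta) ->
  cvg (grid_avg g @ \oo).
Proof.
move=> osc; apply: cauchy_cvg; apply/cauchyP => e e0.
have [N oscN] := osc (e / 4) (divr_gt0 e0 (ltr0n _ 4)).
exists (grid_avg g N); apply: filterS (nbhs_infty_ge N) => n Nn.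
rewrite -ball_normE /=; apply: le_lt_trans (grid_avg_cauchy oscN (leqnn N) Nn) _.
lra.
Qed.

Lemma grid_avg_lim_dist (g : R -> E) N eta : cvg (grid_avg g @ \oo) ->
  small_oscillation g N.+1%:R^-1 eta ->
  forall n, (N <= n)%N -> `|lim (grid_avg g @ \oo) - grid_avg g n| <= 2 * eta.
Proof.
move=> cv oscN n Nn.
have cvd : (fun k => `|grid_avg g k - grid_avg g n|) @ \oo -->
    `|lim (grid_avg g @ \oo) - grid_avg g n|.
  by apply: cvg_norm; apply: cvgB => //; exact: cvg_cst.
rewrite -(cvg_lim (@Rhausdorff R) cvd); apply: limr_le; first by apply/cvg_ex; eexists; exact: cvd.
apply: filterS (nbhs_infty_ge N) => k Nk.
by have := grid_avg_cauchy oscN Nk Nn; apply.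
Qed.

Lemma continuous_X_uniform_limit (A : seg R -> E) :
  (forall e, 0 < e -> exists2 g, continuous_X g & forall l, Xset l -> `|A l - g l| <= e) ->
  continuous_X A.
Proof.
move=> approx l Xl e e0.
have [g gc Ag] := approx (e / 4) (divr_gt0 e0 (ltr0n _ 4)).
have [d d0 gd] := gc l Xl (e / 4) (divr_gt0 e0 (ltr0n _ 4)).
exists d => // m Xm lm.
have := Ag l Xl; have := Ag m Xm; rewrite distrC; have := gd m Xm lm.
have := ler_distD (g m) (A l) (A m); have := ler_distD (g l) (A l) (g m).
lra.
Qed.

End complete_space.

Section integrand.
Variables (R : realType) (E : completeNormedModType R) (F1 F2 : pt R -> E).
Implicit Types (l m : seg R) (s t : R).

Lemma integrandE l t :
  integrand F1 F2 l t = l.2.1 *: F1 (seg_pt l t) + l.2.2 *: F2 (seg_pt l t).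
Proof. by []. Qed.

Lemma normZB_le (a b : R) (u v : E) :
  `|a *: u - b *: v| <= `|a| * `|u - v| + `|a - b| * `|v|.
Proof.
have -> : a *: u - b *: v = a *: (u - v) + (a - b) *: v.
  by rewrite scalerBr scalerBl addrA subrK.
by rewrite -!normrZ ler_normD.
Qed.

Lemma integrand_dist_le l m s t M1 M2 eta :
  `|F1 (seg_pt l s) - F1 (seg_pt m t)| <= eta ->
  `|F2 (seg_pt l s) - F2 (seg_pt m t)| <= eta ->
  `|F1 (seg_pt m t)| <= M1 -> `|F2 (seg_pt m t)| <= M2 ->
  `|integrand F1 F2 l s - integrand F1 F2 m t| <=
    (`|l.2.1| + `|l.2.2|) * eta + `|l.2.1 - m.2.1| * M1 + `|l.2.2 - m.2.2| * M2.
Proof.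
move=> h1 h2 b1 b2; rewrite !integrandE opprD addrACA.
apply: le_trans (ler_normD _ _) _.
have := normZB_le l.2.1 m.2.1 (F1 (seg_pt l s)) (F1 (seg_pt m t)).
have := normZB_le l.2.2 m.2.2 (F2 (seg_pt l s)) (F2 (seg_pt m t)).
have := ler_wpM2l (normr_ge0 l.2.1) h1; have := ler_wpM2l (normr_ge0 l.2.2) h2.
have := ler_wpM2l (normr_ge0 (l.2.1 - m.2.1)) b1.
have := ler_wpM2l (normr_ge0 (l.2.2 - m.2.2)) b2.
lra.
Qed.

Lemma periodic_int (F : pt R -> E) : Defs.periodic F ->
  forall (k1 k2 : int) p, F (p.1 + k1%:~R, p.2 + k2%:~R) = F p.
Proof.
move=> Fper k1 k2 [x y] /=.
have h1 := periodic1_int (fun s => (Fper (s, y + k2%:~R)).1) k1 x.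
have h2 := periodic1_int (fun s => (Fper (x, s)).2) k2 y.
by rewrite /= in h1 h2; rewrite h1 h2.
Qed.

Hypotheses (F1c : continuous F1) (F2c : continuous F2).

Lemma forms_unif_continuous e : 0 < e -> exists2 d, 0 < d &
  forall p q, square p -> ball p d q -> `|F1 p - F1 q| < e /\ `|F2 p - F2 q| < e.
Proof.
move=> e0; have [d1 d10 h1] := compact_unif_continuous F1c (@compact_square R) e0.
have [d2 d20 h2] := compact_unif_continuous F2c (@compact_square R) e0.
exists (Num.min d1 d2) => [|p q sp pq]; first by rewrite lt_min d10 d20.
have m1 : Num.min d1 d2 <= d1 by rewrite ge_min lexx.
have m2 : Num.min d1 d2 <= d2 by rewrite ge_min lexx orbT.
by move: (h1 p q sp (le_ball m1 pq)) (h2 p q sp (le_ball m2 pq)); rewrite -!ball_normE.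
Qed.

Lemma forms_bounded : exists2 M, 0 <= M &
  forall p, square p -> `|F1 p| <= M /\ `|F2 p| <= M.
Proof.
have [M1 M10 h1] := compact_norm_bounded F1c (@compact_square R).
have [M2 M20 h2] := compact_norm_bounded F2c (@compact_square R).
exists (Num.max M1 M2) => [|p sp]; first by rewrite le_max M10.
by rewrite !le_max h1 ?h2 ?orbT.
Qed.

Lemma integrand_small_oscillation e : 0 < e -> exists N, forall l, Xset l ->
  small_oscillation (integrand F1 F2 l) N.+1%:R^-1 e.
Proof.
move=> e0; have [d d0 Fd] := forms_unif_continuous (divr_gt0 e0 (ltr0n _ 2)).
have [N _ /(_ N (leqnn N)) Nd] := near_infty_natSinv_lt (PosNum d0).
exists N => l Xl s t hs ht st; have [_ _ v1 v2] := Xset_bounds Xl.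
have close (x v : R) : `|v| <= 4^-1 -> `|x + s * v - (x + t * v)| < d.
  move=> hv; rewrite opprD addrACA subrr add0r -mulrBl normrM.
  have := ler_wpM2l (normr_ge0 (s - t)) (_ : `|v| <= 1); rewrite mulr1 => sv.
  by apply: le_lt_trans (sv _) _; [lra | exact: le_lt_trans st Nd].
have [h1 h2] : `|F1 (seg_pt l s) - F1 (seg_pt l t)| < e / 2 /\
               `|F2 (seg_pt l s) - F2 (seg_pt l t)| < e / 2.
  by apply: Fd; [exact: seg_pt_square | rewrite ball_ptE; split; exact: close].
apply: le_trans (integrand_dist_le (ltW h1) (ltW h2) (lexx _) (lexx _)) _.
rewrite !subrr normr0 !mul0r !addr0; nra.
Qed.

Lemma riemann_sum_cvg l : Xset l -> cvg (riemann_sum F1 F2 l @ \oo).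
Proof.
move=> Xl; apply: grid_avg_cvg => eta /integrand_small_oscillation[N osc].
by exists N; exact: osc.
Qed.

Lemma iota_riemann_sum_dist e : 0 < e -> exists N, forall l, Xset l ->
  forall n, (N <= n)%N -> `|Defs.iota F1 F2 l - riemann_sum F1 F2 l n| <= e.
Proof.
move=> e0; have [N osc] := integrand_small_oscillation (divr_gt0 e0 (ltr0n _ 2)).
exists N => l Xl n Nn.
have := grid_avg_lim_dist (riemann_sum_cvg Xl) (osc l Xl) Nn.
by rewrite mulrC divfK ?pnatr_eq0.
Qed.

Lemma iota_le_seglen : exists2 K, 0 <= K &
  forall l, Xset l -> `|Defs.iota F1 F2 l| <= K * seglen l.
Proof.
have [M M0 FM] := forms_bounded.
exists (2 * M) => [|l Xl]; first by rewrite mulr_ge0.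
have sum_le n : `|riemann_sum F1 F2 l n| <= 2 * M * seglen l.
  apply: grid_avg_norm_le => t ht; have [b1 b2] := FM _ (seg_pt_square Xl ht).
  rewrite integrandE; apply: le_trans (ler_normD _ _) _; rewrite !normrZ.
  have := ler_pM (normr_ge0 _) (normr_ge0 _) (enorm_ge_norm1 l.2) b1.
  have := ler_pM (normr_ge0 _) (normr_ge0 _) (enorm_ge_norm2 l.2) b2.
  rewrite /seglen; lra.
have cv : `|riemann_sum F1 F2 l n| @[n --> \oo] --> `|Defs.iota F1 F2 l|.
  by apply: cvg_norm; exact: riemann_sum_cvg.
rewrite -(cvg_lim (@Rhausdorff R) cv); apply: limr_le; first by apply/cvg_ex; eexists; exact: cv.
exact: nearW.
Qed.

Hypotheses (F1per : Defs.periodic F1) (F2per : Defs.periodic F2).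

Lemma integrand_equicontinuous_X e : 0 < e -> exists2 d, 0 < d &
  forall l m, Xset l -> Xset m -> dX l m < d ->
  forall t, 0 <= t <= 1 -> `|integrand F1 F2 l t - integrand F1 F2 m t| <= e.
Proof.
move=> e0; have [M M0 FM] := forms_bounded.
have [d1 d10 Fd] := forms_unif_continuous e0.
have M10 : 0 < M + 1 by rewrite ltr_wpDl.
pose d := Num.min (8^-1) (Num.min d1 (e / (8 * (M + 1)))).
have d0 : 0 < d by rewrite /d !lt_min invr_gt0 ltr0n d10 divr_gt0 ?mulr_gt0.
have d8 : d <= 8^-1 by rewrite /d ge_min lexx.
have dd1 : d <= d1 by rewrite /d !ge_min lexx orbT.
have dM : d * (M + 1) <= e / 8.
  have : d <= e / (8 * (M + 1)) by rewrite /d !ge_min lexx !orbT.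
  rewrite ler_pdivlMr ?mulr_gt0 // ler_pdivlMr //; lra.
exists d => // l m Xl Xm lm t ht; have [_ _ l1 l2] := Xset_bounds Xl.
have [k1 [k2 [v1 v2 close]]] := dX_lt_seg_pt Xl Xm d8 lm.
(* Compare the points of l with those of m translated by (k1, k2); periodicity undoes the shift. *)
have [h1 h2] := Fd _ _ (seg_pt_square Xl ht) (le_ball dd1 (close t ht)).
rewrite !periodic_int // in h1 h2.
have [b1 b2] := FM _ (seg_pt_square Xm ht).
apply: le_trans (integrand_dist_le (ltW h1) (ltW h2) b1 b2) _.
have := ler_wpM2r M0 (ltW v1); have := ler_wpM2r M0 (ltW v2).
have := ler_wpM2r (ltW e0) (_ : `|l.2.1| + `|l.2.2| <= 2^-1); nra.
Qed.

Lemma riemann_sum_continuous_X n : continuous_X (fun l => riemann_sum F1 F2 l n).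
Proof.
move=> l Xl e e0; have [d d0 hd] := integrand_equicontinuous_X (divr_gt0 e0 (ltr0n _ 2)).
exists d => // m Xm lm; apply: le_lt_trans (grid_avg_dist _ (hd l m Xl Xm lm)) _.
by rewrite ltr_pdivrMr // ltr_pMr // ltr1n.
Qed.

Lemma iota_continuous_X : continuous_X (Defs.iota F1 F2).
Proof.
apply: continuous_X_uniform_limit => e /iota_riemann_sum_dist[N hN].
by exists (fun l => riemann_sum F1 F2 l N); [exact: riemann_sum_continuous_X | move=> l Xl; exact: hN].
Qed.

End integrand.

Lemma powRN_mul_le (R : realType) (alpha s a C K : R) : 0 < s ->
  a <= C * s `^ alpha + K * s -> s `^ (- alpha) * a <= C + K * s `^ (1 - alpha).
Proof.
move=> s0; have p0 : 0 < s `^ alpha := powR_gt0 _ s0.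
rewrite powRN powRB; last by rewrite (gt_eqF s0) implybT.
rewrite powRr1 ?(ltW s0) // [_^-1 * a]mulrC ler_pdivrMr //.
suff -> : (C + K * (s / s `^ alpha)) * s `^ alpha = C * s `^ alpha + K * s by [].
by field; rewrite gt_eqF.
Qed.

Section Omega.
Variables (R : realType) (E : completeNormedModType R).
Implicit Types (A B : seg R -> E) (l : seg R) (alpha C K eps : R).

Lemma Omega_seglen0 A l : in_Omega A -> Xset l -> seglen l = 0 -> A l = 0.
Proof.
case: l => x [v1 v2] [_ add] Xl /enorm_eq0 /= [v10 v20]; subst v1 v2.
have [[x1 x2] _] := Xl.
have join : joinable (x, (0, 0)) (x, (0, 0)).
  split; [done | split; [done | split; [|split]]].
  - by rewrite /red /seg_f /= !addr0 !tmod_id //; case: x {Xl x1 x2}.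
  - by split; rewrite /= ?mulr0 ?addr0.
  - by rewrite /= addr0; case: Xl.
have := add _ _ join; rewrite /concat /= addr0 => /(congr1 (fun y => y - A (x, (0, 0)))).
by rewrite subrr addrK.
Qed.

Lemma gr_le_norm_le alpha B C : 0 <= alpha -> gr_le alpha B C ->
  (forall l, Xset l -> seglen l = 0 -> B l = 0) ->
  forall l, Xset l -> `|B l| <= Num.max C 0.
Proof.
move=> a0 BC B0 l Xl; have [s0|s0] := eqVneq (seglen l) 0.
  by rewrite B0 // normr0 le_max lexx orbT.
have {}s0 : 0 < seglen l by rewrite lt0r s0 sqrtr_ge0.
have s1 : seglen l `^ alpha <= 1.
  have := @ge0_ler_powR R alpha a0 (seglen l) 1; rewrite powR1; apply; rewrite ?nnegrE ?(ltW s0) //.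
  by case: Xl => _ /le_trans; apply; rewrite invf_le1 // ler1n.
have Cmax : C <= Num.max C 0 by rewrite le_max lexx.
apply: le_trans (BC l Xl s0) _; apply: le_trans (ler_wpM2r (powR_ge0 _ _) Cmax) _.
by rewrite ler_piMr // le_max lexx orbT.
Qed.

Lemma sup_small_bound alpha A eps b : 0 <= b ->
  (forall l, Xset l -> 0 < seglen l -> seglen l < eps ->
     seglen l `^ (- alpha) * `|A l| <= b) ->
  0 <= sup_small alpha A eps <= b.
Proof.
move=> b0 Ab; rewrite /sup_small; set S := [set r | _].
have S_bound r : S r -> 0 <= r <= b.
  by case=> l [Xl s0 seps ->]; rewrite mulr_ge0 ?powR_ge0 // Ab.
have [[r Sr]|/nonemptyPn ->] := pselect (S !=set0); last by rewrite sup0 lexx.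
have supS : has_sup S by split; [exists r | exists b => q /S_bound /andP[]].
have /andP[r0 _] := S_bound r Sr.
rewrite (le_trans r0 (sup_upper_bound supS Sr)) /=.
by apply: ge_sup => [|q /S_bound /andP[]]; first exists r.
Qed.

Lemma sup_small_cvg0 alpha A : alpha < 1 ->
  (forall e, 0 < e -> exists C K, [/\ C < e, 0 <= K & forall l, Xset l -> 0 < seglen l ->
     `|A l| <= C * seglen l `^ alpha + K * seglen l]) ->
  sup_small alpha A eps @[eps --> 0^'+] --> 0.
Proof.
move=> a1 approx; apply/cvgrPdist_le => e e0.
have [C [K [Ce K0 AK]]] := approx (e / 2) (divr_gt0 e0 (ltr0n _ 2)).
have b0 : 0 < 1 - alpha by rewrite subr_gt0.
have K1 : 0 < K + 1 by rewrite ltr_wpDl.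
have /cvgrPdist_lt /(_ _ (divr_gt0 e0 (mulr_gt0 (ltr0n _ 2) K1))) := powR_cvg0 b0.
move=> small; near=> eps.
have eps0 : 0 < eps by near: eps; exact: nbhs_right_gt.
have : `|0 - eps `^ (1 - alpha)| < e / (2 * (K + 1)) by near: eps; exact: small.
rewrite sub0r normrN ger0_norm ?powR_ge0 // ltr_pdivlMr ?mulr_gt0 // => eps_small.
have Keps : K * eps `^ (1 - alpha) <= e / 2.
  have := powR_ge0 eps (1 - alpha); rewrite ler_pdivlMr //; nra.
have := @sup_small_bound alpha A eps (Num.max C 0 + K * eps `^ (1 - alpha)).
case/(_ _ _)/andP => [| l Xl s0 seps |sup0 supe].
- by rewrite addr_ge0 ?le_max ?lexx ?orbT ?mulr_ge0 ?powR_ge0.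
- apply: le_trans (powRN_mul_le s0 (AK l Xl s0)) _; apply: lerD; first by rewrite le_max lexx.
  by apply: ler_wpM2l => //; apply: ge0_ler_powR; rewrite ?nnegrE ?ltW.
- rewrite sub0r normrN ger0_norm //; apply: le_trans supe _.
  have : Num.max C 0 <= e / 2 by rewrite ge_max (ltW Ce) divr_ge0 // ltW.
  lra.
Unshelve. all: by end_near.
Qed.

End Omega.

Theorem proposition3p25 (R : realType) (E : completeNormedModType R)
    (alpha : R) (A : seg R -> E) :
  0 < alpha < 1 -> in_Omega1_gr alpha A ->
  continuous_X A /\ sup_small alpha A eps @[eps --> 0^'+] --> 0.
Proof.
move=> /andP[a0 a1] [[AOm _] approx].
have smooth_approx e : 0 < e -> exists F1 F2 : pt R -> E, exists C K,
    [/\ continuous_X (Defs.iota F1 F2), C < e, 0 <= K,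
        forall l, Xset l -> `|A l - Defs.iota F1 F2 l| <= Num.max C 0 &
        forall l, Xset l -> 0 < seglen l -> `|A l| <= C * seglen l `^ alpha + K * seglen l].
  move=> e0; have [F1 [F2 [[P1 [P2 [S1 S2]]] [C Ce AC]]]] := approx e e0.
  have [K K0 IK] := iota_le_seglen (S1 0%N) (S2 0%N).
  exists F1, F2, C, K; split => //; first exact: iota_continuous_X (S1 0%N) (S2 0%N) P1 P2.
    apply: gr_le_norm_le (ltW a0) AC _ => l Xl l0.
    have := IK l Xl; rewrite l0 mulr0 normr_le0 => /eqP->.
    by rewrite (Omega_seglen0 AOm Xl l0) subr0.
  move=> l Xl l0; rewrite -(subrK (Defs.iota F1 F2 l) (A l)).
  exact: le_trans (ler_normD _ _) (lerD (AC l Xl l0) (IK l Xl)).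
split.
- apply: continuous_X_uniform_limit => e e0.
  have [F1 [F2 [C [K [Ic Ce _ AI _]]]]] := smooth_approx e e0.
  exists (Defs.iota F1 F2) => // l Xl; apply: le_trans (AI l Xl) _.
  by rewrite ge_max (ltW Ce) ltW.
- apply: sup_small_cvg0 a1 _ => e /smooth_approx[F1 [F2 [C [K [_ Ce K0 _ AK]]]]].
  by exists C, K.
Qed.
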